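(* Let $(\Omega,\mathcal F,\mathbb P)$ be a probability space with an invertible, measurable, $\mathbb P$-preserving ergodic $\sigma$; let $M$ be a compact Riemannian manifold with normalized volume $m$, $I\subset(-1,1)$ an open interval containing $0$, and for $\omega\in\Omega$, $\epsilon\in I$ let $\mathcal L_{\omega,\epsilon}$ be the transfer operator (with respect to $m$) of a map $T_{\omega,\epsilon}\colon M\to M$, with $\mathcal L^n_{\omega,\epsilon}:=\mathcal L_{\sigma^{n-1}\omega,\epsilon}\circ\cdots\circ\mathcal L_{\omega,\epsilon}$. Assume there is a random variable $E(\omega)$ with $\|\mathcal L_{\omega,\epsilon}\mathbf 1\|_\infty\le E(\omega)$ for all $\epsilon\in I$ and $\mathbb P$-a.e. $\omega$. Assume also there are functions $h_{\omega,\epsilon}$, a number $\beta>1$ and $C_1\in L^{p_1}(\Omega,\mathcal F,\mathbb P)$ with $p_1\ge1$ such that for $\mathbb P$-a.e. $\omega$, all $n\ge1$, $\epsilon\in I$ and $h\in C^1(M)$, $$\|\mathcal L^n_{\omega,\epsilon}h-m(h)h_{\sigma^n\omega,\epsilon}\|_\infty\le C_1(\omega)n^{-\beta}\|h\|_{C^1}.$$ Then there exists $B_0\in L^{p_1}(\Omega,\mathcal F,\mathbb P)$ such that for $\mathbb P$-a.e. $\omega$, all $n\ge1$ and $\epsilon\in I$, $\|\mathcal L^n_{\sigma^{-n}\omega,\epsilon}\mathbf 1\|_\infty\le B_0(\omega)+E(\sigma^{-1}\omega)$.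
   Context: $m(h)=\int_M h\,dm$; $\mathbf 1$ is the constant function $1$. *)

From HB Require Import structures.
From mathcomp Require Import all_boot all_order all_algebra.
From mathcomp Require Import all_classical all_reals all_analysis.
Set Implicit Arguments. Unset Strict Implicit. Unset Printing Implicit Defensive.
Import Order.TTheory GRing.Theory Num.Theory.
Local Open Scope classical_set_scope.
Local Open Scope ring_scope.

Section Defs.
Context {R : realType}.

Definition invertible_measurable {d} {O : measurableType d}
  (sigma sigmainv : O -> O) : Prop :=
  cancel sigma sigmainv /\ cancel sigmainv sigma /\
  measurable_fun setT sigma /\ measurable_fun setT sigmainv.

Definition measure_preserving {d} {O : measurableType d}
  (P : probability O R) (sigma : O -> O) : Prop :=
  forall A, measurable A -> P (sigma @^-1` A) = P A.

Definition ergodic {d} {O : measurableType d}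
  (P : probability O R) (sigma : O -> O) : Prop :=
  forall A, measurable A -> sigma @^-1` A = A -> P A = 0%E \/ P A = 1%E.

Definition inLp {d} {O : measurableType d} (P : probability O R) (p : R)
  (f : O -> R) : Prop :=
  measurable_fun setT f /\ ('N[P]_(p%:E)[EFin \o f] < +oo)%E.

Definition supnorm {d} {M : measurableType d} (m : probability M R)
  (f : M -> R) : \bar R := 'N[m]_(+oo%E)[EFin \o f].

(* L is the transfer operator of T with respect to m: T is measurable and
   nonsingular, and L is the dual of the Koopman operator g |-> g \o T:
   for f in L^1(m) and g in L^oo(m), int (L f) g dm = int f (g \o T) dm. *)
Definition transfer_operator {d} {M : measurableType d} (m : probability M R)
  (T : M -> M) (L : (M -> R) -> (M -> R)) : Prop :=
  measurable_fun setT T /\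
  (forall A, measurable A -> m A = 0%E -> m (T @^-1` A) = 0%E) /\
  forall f, m.-integrable setT (EFin \o f) ->
    m.-integrable setT (EFin \o L f) /\
    forall g : M -> R, measurable_fun setT g -> (exists K : R, forall x, `|g x| <= K) ->
      (\int[m]_x (L f x * g x)%:E = \int[m]_x (f x * g (T x))%:E)%E.

Fixpoint Lcomp {O M : Type} (sigma : O -> O)
  (L : O -> (M -> R) -> (M -> R)) (n : nat) (w : O) (h : M -> R) : M -> R :=
  match n with
  | 0%N => h
  | k.+1 => L (iter k sigma w) (Lcomp sigma L k w h)
  end.

(* Abstraction of the C^1 space of the compact Riemannian manifold M
   (differential geometry is not available): a class of functions with a
   norm, containing the constants with ||c||_{C^1} = |c|, consisting of
   measurable functions with sup |h| <= ||h||_{C^1}. *)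
Definition C1_structure {d} {M : measurableType d}
  (C1 : set (M -> R)) (C1norm : (M -> R) -> R) : Prop :=
  (forall c : R, C1 (fun _ => c) /\ C1norm (fun _ => c) = `|c|) /\
  (forall h, C1 h -> measurable_fun setT h /\ forall x, `|h x| <= C1norm h).

End Defs.

From HB Require Import structures.
From mathcomp Require Import all_boot all_order all_algebra.
From mathcomp Require Import all_classical all_reals all_analysis.
From mathcomp Require Import measurable_realfun ring lra.
Import Order.TTheory GRing.Theory Num.Theory.
Local Open Scope classical_set_scope.
Local Open Scope ring_scope.

(* Put a_k(w) := k^(-beta) |C_1(sigma^(-k) w)|.  The decay estimate for h = 1,
   taken at sigma^(-n) w and at sigma^(-1) w with n = 1, puts L^n_(sigma^(-n) w) 1
   and L_(sigma^(-1) w) 1 within a_n(w) and a_1(w) of h_w in sup-norm; as the latter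
   is bounded by E(sigma^(-1) w), the triangle inequality bounds the former by
   a_n + a_1 + E(sigma^(-1) w).  Every a_k is at most F^(1/p_1) with
   F := sum_k a_k^(p_1), and since sigma^(-1) preserves P,
   int F dP = ||C_1||_(p_1)^(p_1) sum_k k^(-beta p_1) < oo because beta p_1 > 1.
   Hence B_0 := 2 F^(1/p_1) is in L^(p_1). *)

Lemma can_iter {T : Type} {f g : T -> T} n : cancel f g -> cancel (iter n f) (iter n g).
Proof.
by move=> fK; elim: n => [//|n IHn] x; rewrite iterSr [iter n.+1 f x]iterS fK IHn.
Qed.

Lemma EFin_fine_le {R : realType} (x : \bar R) : (0 <= x)%E -> ((fine x)%:E <= x)%E.
Proof. by case: x => [r _|_|//] /=; [exact: lexx | exact: leey]. Qed.

Lemma measurable_preimageT {d d'} {T : measurableType d} {U : measurableType d'}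
  (g : T -> U) (A : set U) :
  measurable_fun setT g -> measurable A -> measurable (g @^-1` A).
Proof. by move=> mg mA; rewrite -[_ @^-1` _]setTI; exact: mg. Qed.

Section supnorm.
Context {R : realType} {d} {M : measurableType d} (m : probability M R).

Lemma supnorm_leP (f : M -> R) (c : R) :
  reflect (\forall x \ae m, `|f x| <= c) (supnorm m f <= c%:E)%E.
Proof.
have m_gt0 : (0 < m setT)%E by rewrite (@probability_setT _ _ _ m) lte01.
rewrite /supnorm unlock /Lnorm ifT //.
apply: (iffP idP) => [/ess_sup_inf.ess_supP|f_le].
  by apply: filterS => x /=; rewrite lee_fin.
by apply/ess_sup_inf.ess_supP; apply: filterS f_le => x /=; rewrite lee_fin.
Qed.

Lemma supnorm_le_triangle (f g h : M -> R) (a b e : R) :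
  (supnorm m (fun x => (f x - h x)%R) <= a%:E)%E ->
  (supnorm m (fun x => (g x - h x)%R) <= b%:E)%E ->
  (supnorm m g <= e%:E)%E ->
  (supnorm m f <= (a + b + e)%R%:E)%E.
Proof.
move=> /supnorm_leP fh /supnorm_leP gh /supnorm_leP g_le; apply/supnorm_leP.
apply: filterS3 fh gh g_le => x fh_x gh_x g_x.
have -> : f x = (f x - h x) - (g x - h x) + g x by ring.
have := ler_normB (f x - h x) (g x - h x).
have := ler_normD ((f x - h x) - (g x - h x)) (g x).
lra.
Qed.

End supnorm.
Arguments supnorm_le_triangle {R d M m f g h a b e}.

Section measure_preserving.
Context {R : realType} {d} {O : measurableType d} (P : probability O R).
Variable phi : O -> O.
Hypotheses (mphi : measurable_fun setT phi) (phiP : measure_preserving P phi).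

Lemma measurable_fun_iter k : measurable_fun setT (iter k phi).
Proof. by elim: k => [|k IHk]; [exact: measurable_id | exact: measurableT_comp]. Qed.

Lemma measure_preserving_iter k : measure_preserving P (iter k phi).
Proof.
elim: k => [|k IHk] A mA; first by rewrite preimage_id.
rewrite -[X in P X]/(iter k phi @^-1` (phi @^-1` A)) IHk ?phiP //.
exact: measurable_preimageT.
Qed.

Lemma ae_comp_measure_preserving (Q : O -> Prop) :
  {ae P, forall x, Q x} -> {ae P, forall x, Q (phi x)}.
Proof.
move=> [N [mN PN QN]]; exists (phi @^-1` N); split.
- exact: measurable_preimageT.
- by rewrite phiP.
- by move=> x /= nQ; apply: QN.
Qed.

Lemma ge0_integral_comp_measure_preserving (f : O -> \bar R) :
  measurable_fun setT f -> (forall x, 0 <= f x)%E ->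
  (\int[P]_x f (phi x) = \int[P]_x f x)%E.
Proof.
move=> mf f_ge0.
have := ge0_integral_pushforward mphi P measurableT mf (fun y _ => f_ge0 y).
rewrite preimage_setT => <-.
by apply: eq_measure_integral => A mA _; exact: phiP.
Qed.

Lemma measure_preserving_inverse (psi : O -> O) :
  cancel phi psi -> measurable_fun setT psi -> measure_preserving P psi.
Proof.
move=> phiK mpsi A mA; rewrite -phiP; last exact: measurable_preimageT.
by congr (P _); apply/seteqP; split => x /=; rewrite phiK.
Qed.

End measure_preserving.
Arguments measurable_fun_iter {d O phi}.
Arguments measure_preserving_iter {R d O P phi}.
Arguments ae_comp_measure_preserving {R d O P phi} mphi phiP {Q}.
Arguments ge0_integral_comp_measure_preserving {R d O P phi} mphi phiP {f}.
Arguments measure_preserving_inverse {R d O P phi} phiP {psi}.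

Section powRN_series.
Context {R : realType} (s : R).
Hypothesis s_gt1 : 1 < s.
(* Cauchy condensation: the 2^J indices in [2^J, 2^(J+1)) each contribute at most
   (2^J)^(-s), so the block sums to at most q^J. *)
Let q : R := 2 `^ (1 - s).

Let q_gt0 : 0 < q. Proof. exact: powR_gt0. Qed.

Let q_lt1 : q < 1.
Proof.
rewrite /q /powR pnatr_eq0 /= -[X in _ < X]expR0 ltr_expR.
by rewrite pmulr_llt0 ?ln_gt0 ?ltr1n // subr_lt0.
Qed.

Lemma sum_powRN_dyadic_le J : \sum_(2 ^ J <= k < 2 ^ J.+1) k%:R `^ (- s) <= q ^+ J.
Proof.
have J_gt0 : (0 < 2 ^ J)%N by rewrite expn_gt0.
apply: (@le_trans _ _ (\sum_(2 ^ J <= k < 2 ^ J.+1) (2 ^ J)%:R `^ (- s))).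
  apply: ler_sum_nat => k /andP[Jk _].
  rewrite !powRN lef_pV2 ?posrE ?powR_gt0 ?ltr0n //; last exact: leq_trans Jk.
  by apply: ge0_ler_powR; rewrite ?nnegrE ?ler0n ?ler_nat // ltW // (lt_trans ltr01).
rewrite sumr_const_nat expnS mul2n -addnn addnK.
rewrite -(mulr_natr ((2 ^ J)%:R `^ (- s))) -[X in _ * X](powRr1 (ler0n _ (2 ^ J))).
rewrite -powRD; last by rewrite pnatr_eq0 -lt0n J_gt0 implybT.
rewrite natrX -powR_mulrn ?ler0n // -powR_mulrn ?(ltW q_gt0) //.
by rewrite /q powRAC [- s + 1]addrC.
Qed.

Lemma sum_powRN_pow2_le J : \sum_(0 <= k < 2 ^ J) k%:R `^ (- s) <= (1 - q)^-1.
Proof.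
have geometric_le : \sum_(0 <= k < 2 ^ J) k%:R `^ (- s) <= \sum_(0 <= j < J) q ^+ j.
  elim: J => [|J IHJ].
    by rewrite expn0 big_nat1 big_geq // powR0 // oppr_eq0 gt_eqF // (lt_trans ltr01).
  rewrite big_nat_recr //= (big_cat_nat _ (n := 2 ^ J)) //=; last first.
    by rewrite expnS mul2n -addnn leq_addl.
  by apply: lerD => //; exact: sum_powRN_dyadic_le.
apply: le_trans geometric_le _.
have := geometric_le_lim J ler01 q_gt0; rewrite ger0_norm ?(ltW q_gt0) // mul1r.
move=> /(_ q_lt1); rewrite seriesEnat /=.
by under eq_bigr do rewrite /geometric /= mul1r.
Qed.

Lemma nneseries_powRN_lty : (\sum_(k <oo) (k%:R `^ (- s))%:E < +oo)%E.
Proof.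
apply: (@le_lt_trans _ _ ((1 - q)^-1)%:E); last exact: ltry.
apply: lime_le; first by apply: is_cvg_nneseries => n _ _; rewrite lee_fin powR_ge0.
apply: nearW => n /=; rewrite sumEFin lee_fin.
apply: le_trans (sum_powRN_pow2_le n).
rewrite [leRHS](big_cat_nat _ (n := n)) //=; last exact/ltnW/ltn_expl.
by rewrite lerDl sumr_ge0 // => k _; exact: powR_ge0.
Qed.

End powRN_series.

Lemma inLp_mul_powRV {R : realType} {d} {O : measurableType d} (P : probability O R)
    (p r : R) (G : O -> R) :
  0 < p -> measurable_fun setT G -> (forall x, 0 <= G x) ->
  (\int[P]_x (G x)%:E < +oo)%E -> inLp P p (fun x => r * G x `^ p^-1).
Proof.
move=> p_gt0 mG G_ge0 intG; split.
  exact: measurable_funM (measurable_cst _) (measurableT_comp (measurable_powR _) mG).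
apply: (@lty_poweRy _ _ p); first by rewrite gt_eqF.
rewrite poweR_Lnorm ?gt_eqF //=.
under eq_integral => x _.
  rewrite normrM powRM ?normr_ge0 // (ger0_norm (powR_ge0 _ _)).
  rewrite -powRrM mulVf ?gt_eqF // powRr1 // EFinM.
  over.
rewrite ge0_integralZl_EFin ?powR_ge0 //.
- exact: lte_mul_pinfty.
- by move=> x _; rewrite lee_fin.
- exact/measurable_EFinP.
Qed.

Definition weighted_orbit_sum {R : realType} {O : Type} (tau : O -> O) (p : R)
  (c : nat -> R) (f : O -> R) (w : O) : \bar R :=
  (\sum_(k <oo) ((c k * `|f (iter k tau w)|) `^ p)%:E)%E.

Section weighted_orbit_sum.
Context {R : realType} {O : Type}.
Variables (tau : O -> O) (p : R) (c : nat -> R) (f : O -> R).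
Hypotheses (p_gt0 : 0 < p) (c_ge0 : forall k, 0 <= c k).
Local Notation S := (weighted_orbit_sum tau p c f).

Lemma weighted_orbit_sum_ge0 w : (0 <= S w)%E.
Proof. by apply: nneseries_ge0 => k _ _; rewrite lee_fin powR_ge0. Qed.

Lemma weighted_orbit_sum_term_le w k : S w \is a fin_num ->
  c k * `|f (iter k tau w)| <= fine (S w) `^ p^-1.
Proof.
move=> Sw_fin; set a := c k * _.
have a_ge0 : 0 <= a by rewrite mulr_ge0.
rewrite -[leLHS](powRr1 a_ge0) -(mulfV (lt0r_neq0 p_gt0)) powRrM.
apply: ge0_ler_powR; rewrite ?nnegrE ?invr_ge0 ?(ltW p_gt0) ?powR_ge0 //.
  exact/fine_ge0/weighted_orbit_sum_ge0.
rewrite -lee_fin fineK //.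
apply: le_trans (nneseries_lim_ge k.+1 _); last by move=> i _ _; rewrite lee_fin powR_ge0.
rewrite big_nat_recr //=; apply: lee_paddl => //.
by rewrite sume_ge0 // => i _; rewrite lee_fin powR_ge0.
Qed.

End weighted_orbit_sum.
Arguments weighted_orbit_sum_term_le {R O tau p c f}.

Section weighted_orbit_sum_integrable.
Context {R : realType} {d} {O : measurableType d} (P : probability O R).
Variables (tau : O -> O) (p : R) (c : nat -> R) (f : O -> R).
Hypotheses (p_gt0 : 0 < p) (c_ge0 : forall k, 0 <= c k).
Hypotheses (mtau : measurable_fun setT tau) (tauP : measure_preserving P tau).
Hypotheses (fLp : inLp P p f) (c_lty : (\sum_(k <oo) (c k `^ p)%:E < +oo)%E).
Local Notation S := (weighted_orbit_sum tau p c f).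

Let mf : measurable_fun setT f := fLp.1.

Let measurable_term k :
  measurable_fun setT (fun x => ((c k * `|f (iter k tau x)|) `^ p)%:E).
Proof.
apply/measurable_EFinP; apply: measurableT_comp (measurable_powR _) _.
apply: measurable_funM (measurable_cst _) _.
exact: measurableT_comp (@normr_measurable R setT)
  (measurableT_comp mf (measurable_fun_iter mtau k)).
Qed.

Let measurable_S : measurable_fun setT S.
Proof.
apply: (@ge0_emeasurable_sum _ _ _ _
  (fun k x => ((c k * `|f (iter k tau x)|) `^ p)%:E) xpredT) => [k x _ _|k _].
  by rewrite lee_fin powR_ge0.
exact: measurable_term.
Qed.

Lemma integral_weighted_orbit_sum_lty : (\int[P]_x S x < +oo)%E.
Proof.
pose g x := (`|f x| `^ p)%:E.
have mg : measurable_fun setT g.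
  apply/measurable_EFinP.
  exact: measurableT_comp (measurable_powR _)
    (measurableT_comp (@normr_measurable R setT) mf).
have g_ge0 x : (0 <= g x)%E by rewrite lee_fin powR_ge0.
have g_fin : (\int[P]_x g x)%E \is a fin_num.
  have := poweR_lty p fLp.2; rewrite poweR_Lnorm ?gt_eqF // => g_lty.
  by rewrite ge0_fin_numE ?integral_ge0.
have integral_term k : (\int[P]_x ((c k * `|f (iter k tau x)|) `^ p)%:E
                        = (c k `^ p)%:E * \int[P]_x g x)%E.
  under eq_integral do rewrite powRM ?normr_ge0 // EFinM.
  rewrite ge0_integralZl_EFin ?powR_ge0 //; last first.
    exact: measurableT_comp mg (measurable_fun_iter mtau k).
  by rewrite (ge0_integral_comp_measure_preserving (measurable_fun_iter mtau k)
               (measure_preserving_iter mtau tauP k) mg g_ge0).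
rewrite /weighted_orbit_sum integral_nneseries //; last first.
  by move=> k x _; rewrite lee_fin powR_ge0.
rewrite (eq_eseriesr (fun k _ => integral_term k)) -(fineK g_fin).
under eq_eseriesr do rewrite muleC.
rewrite nneseriesZl; last by move=> k _; rewrite lee_fin powR_ge0.
by apply: lte_mul_pinfty; rewrite ?fineK ?integral_ge0.
Qed.

Lemma ae_weighted_orbit_sum_fin : {ae P, forall w, S w \is a fin_num}.
Proof.
have S_int : P.-integrable setT S.
  apply/integrableP; split => //.
  under eq_integral do rewrite gee0_abs ?weighted_orbit_sum_ge0 //.
  exact: integral_weighted_orbit_sum_lty.
by apply: filterS (integrable_ae measurableT S_int) => w; apply.
Qed.

Lemma inLp_weighted_orbit_sum_root (r : R) :
  inLp P p (fun w => r * fine (S w) `^ p^-1).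
Proof.
apply: inLp_mul_powRV => //.
- exact: measurableT_comp (@fine_measurable R setT measurableT) measurable_S.
- by move=> w; exact/fine_ge0/weighted_orbit_sum_ge0.
apply: le_lt_trans integral_weighted_orbit_sum_lty.
apply: ge0_le_integral => //.
- by move=> w _; rewrite lee_fin fine_ge0 ?weighted_orbit_sum_ge0.
- apply/measurable_EFinP.
  exact: measurableT_comp (@fine_measurable R setT measurableT) measurable_S.
- by move=> w _; apply: EFin_fine_le; exact: weighted_orbit_sum_ge0.
Qed.

End weighted_orbit_sum_integrable.
Arguments ae_weighted_orbit_sum_fin {R d O P tau p c f}.

Theorem lemma22 (R : realType)
  (dO : measure_display) (Omega : measurableType dO) (P : probability Omega R)
  (sigma sigmainv : Omega -> Omega)
  (Hsig : invertible_measurable sigma sigmainv)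
  (Hpres : measure_preserving P sigma) (Herg : ergodic P sigma)
  (dM : measure_display) (M : measurableType dM) (m : probability M R)
  (C1 : set (M -> R)) (C1norm : (M -> R) -> R)
  (HC1 : C1_structure C1 C1norm)
  (a b : R) (Ha : -1 <= a) (Ha0 : a < 0) (Hb0 : 0 < b) (Hb : b <= 1)
  (T : Omega -> R -> M -> M) (L : Omega -> R -> (M -> R) -> (M -> R))
  (HL : forall w eps, eps \in `]a, b[ -> transfer_operator m (T w eps) (L w eps))
  (E : Omega -> R) (HEmeas : measurable_fun setT E)
  (HE : {ae P, forall w, forall eps, eps \in `]a, b[ ->
          (supnorm m (L w eps (fun _ => 1%R)) <= (E w)%:E)%E})
  (hh : Omega -> R -> M -> R) (beta : R) (Hbeta : 1 < beta)
  (p1 : R) (Hp1 : 1 <= p1) (Cst1 : Omega -> R) (HC1p : inLp P p1 Cst1)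
  (Hdec : {ae P, forall w, forall (n : nat) eps h, (1 <= n)%N ->
          eps \in `]a, b[ -> C1 h ->
          (supnorm m (fun x => (Lcomp sigma (fun w' => L w' eps) n w h x
                               - Rintegral m setT h * hh (iter n sigma w) eps x)%R)
           <= (Cst1 w * (n%:R `^ (- beta)) * C1norm h)%R%:E)%E}) :
  exists B0 : Omega -> R, inLp P p1 B0 /\
    {ae P, forall w, forall (n : nat) eps, (1 <= n)%N -> eps \in `]a, b[ ->
      (supnorm m (Lcomp sigma (fun w' => L w' eps) n (iter n sigmainv w)
                        (fun _ => 1%R))
       <= (B0 w + E (sigmainv w))%R%:E)%E}.
Proof.
have [sigmaK [sigmainvK [msigma msigmainv]]] := Hsig.
have p1_gt0 : 0 < p1 by apply: lt_le_trans Hp1.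
have sigmainvP := measure_preserving_inverse Hpres sigmaK msigmainv.
pose c k : R := k%:R `^ (- beta).
have c_ge0 k : 0 <= c k by exact: powR_ge0.
have c_lty : (\sum_(k <oo) (c k `^ p1)%:E < +oo)%E.
  under eq_eseriesr do rewrite -powRrM mulNr.
  by apply: nneseries_powRN_lty; nra.
pose S := weighted_orbit_sum sigmainv p1 c Cst1.
exists (fun w => 2 * fine (S w) `^ p1^-1); split.
  exact: inLp_weighted_orbit_sum_root.
have dec := ae_foralln (fun k => ae_comp_measure_preserving
  (measurable_fun_iter msigmainv k) (measure_preserving_iter msigmainv sigmainvP k) Hdec).
have E_bound := ae_comp_measure_preserving msigmainv sigmainvP HE.
have S_fin := ae_weighted_orbit_sum_fin p1_gt0 c_ge0 msigmainv sigmainvP HC1p c_lty.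
apply: filterS3 dec E_bound S_fin => w dec_w E_w S_w n eps n_ge1 eps_I.
have one_C1 : C1 (fun _ => 1) := (HC1.1 1).1.
have dec_n := dec_w n n eps _ n_ge1 eps_I one_C1.
have dec_1 := dec_w 1%N 1%N eps _ (leqnn 1) eps_I one_C1.
rewrite (HC1.1 1).2 normr1 mulr1 (can_iter n sigmainvK) in dec_n.
rewrite (HC1.1 1).2 normr1 mulr1 (can_iter 1 sigmainvK) in dec_1.
apply: le_trans (supnorm_le_triangle dec_n dec_1 (E_w eps eps_I)) _.
have coef_le k : Cst1 (iter k sigmainv w) * c k <= fine (S w) `^ p1^-1.
  rewrite mulrC; apply: le_trans (weighted_orbit_sum_term_le p1_gt0 c_ge0 w k S_w).
  by rewrite ler_wpM2l ?ler_norm.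
rewrite lee_fin lerD2r.
by have := coef_le n; have := coef_le 1%N; rewrite /c; lra.
Qed.
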